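(* Let $\Lambda$ be a locally finite $k$-graph with no sources or sinks, and let $\alpha$ be an action of $\mathbb{Z}^l$ on $\Lambda$ by automorphisms. Then $\Lambda$ is $\alpha$-aperiodic if and only if $(\Lambda^\infty,\tau^{\sigma,\alpha})$ is topologically free.
   Context: A $k$-graph is a countable category $\Lambda$ with a functor $d:\Lambda\to\mathbb{N}^k$ with unique factorisation; vertices are degree-$0$ morphisms. Locally finite with no sources or sinks: for each $p$ and vertex $v$, $v\Lambda^p$ and $\Lambda^pv$ are finite and nonempty. An automorphism is a bijective degree-preserving functor. $\Lambda^\infty$ is the set of degree-preserving functors $x:\Omega_k\to\Lambda$ ($\Omega_k=\{(a,b)\in\mathbb{N}^k\times\mathbb{N}^k:a\le b\}$ with $r(a,b)=(a,a)$, $s(a,b)=(b,b)$, $(a,b)(b,c)=(a,c)$, $d(a,b)=b-a$), with topology generated by the cylinder sets $\lambda\Lambda^\infty=\{x:x(0,d(\lambda))=\lambda\}$; $v\Lambda^\infty=\{x:x(0,0)=v\}$; $\sigma^p(x)(0,n)=x(p,p+n)$; $\phi^\infty(x)(0,n)=\phi(x(0,n))$ for an automorphism $\phi$. $\tau^{\sigma,\alpha}_{(p,m)}=\sigma^p\circ\alpha^\infty_{-m}$ for $(p,m)\in\mathbb{N}^k\times\mathbb{N}^l$. $(\Lambda^\infty,\tau^{\sigma,\alpha})$ is topologically free if for all distinct $s,t\in\mathbb{N}^k\times\mathbb{N}^l$ the set $\{x:\tau^{\sigma,\alpha}_s(x)=\tau^{\sigma,\alpha}_t(x)\}$ has empty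 interior. $\Lambda$ is $\alpha$-aperiodic if for each vertex $v$ and distinct $(p,m),(q,n)\in\mathbb{N}^k\times\mathbb{N}^l$ there is $x\in v\Lambda^\infty$ with $\sigma^p(\alpha^\infty_{-m}(x))\ne\sigma^q(\alpha^\infty_{-n}(x))$. *)

From mathcomp Require Import all_boot all_algebra.
Set Implicit Arguments. Unset Strict Implicit. Unset Printing Implicit Defensive.

(* N^k and Z^l as finite functions (extensional, decidable equality) *)
Notation Nk k := {ffun 'I_k -> nat}.
Notation Zl l := {ffun 'I_l -> int}.

Definition zeroN k : Nk k := [ffun _ => 0%N].
Definition addN k (m n : Nk k) : Nk k := [ffun i => (m i + n i)%N].
Definition subN k (m n : Nk k) : Nk k := [ffun i => (m i - n i)%N].
Definition leN k (m n : Nk k) : bool := [forall i, (m i <= n i)%N].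

Definition zeroZ l : Zl l := [ffun _ => 0%R].
Definition addZ l (z w : Zl l) : Zl l := [ffun i => (z i + w i)%R].
Definition negN l (m : Nk l) : Zl l := [ffun i => (- (m i)%:Z)%R].

(* Data of a small category with a degree functor to N^k.
   Morphisms go from ks to kr; kcomp f g is the composite "f g", meaningful
   when ks f = kr g (the convention of the paper / of Omega_k). *)
Record kgraph_data (k : nat) := KGraphData {
  Vert : Type;
  Mor : countType;
  kr : Mor -> Vert;
  ks : Mor -> Vert;
  kid : Vert -> Mor;
  kcomp : Mor -> Mor -> Mor;
  kd : Mor -> Nk k
}.

Arguments kr {k Λ} : rename.
Arguments ks {k Λ} : rename.
Arguments kid {k Λ} : rename.
Arguments kcomp {k Λ} : rename.
Arguments kd {k Λ} : rename.

Section KGraph.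
Variable k : nat.
Variable L : kgraph_data k.

Definition is_kgraph : Prop :=
  (forall v : Vert L, kr (kid v) = v /\ ks (kid v) = v) /\
  (forall f g : Mor L, ks f = kr g -> kr (kcomp f g) = kr f /\ ks (kcomp f g) = ks g) /\
  (forall f : Mor L, kcomp (kid (kr f)) f = f /\ kcomp f (kid (ks f)) = f) /\
  (forall f g h : Mor L, ks f = kr g -> ks g = kr h ->
      kcomp (kcomp f g) h = kcomp f (kcomp g h)) /\
  (forall v : Vert L, kd (kid v) = zeroN k) /\
  (forall f g : Mor L, ks f = kr g -> kd (kcomp f g) = addN (kd f) (kd g)) /\
  (forall (lam : Mor L) (m n : Nk k), kd lam = addN m n ->
      (exists mu nu : Mor L,
          ks mu = kr nu /\ lam = kcomp mu nu /\ kd mu = m /\ kd nu = n) /\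
      (forall mu nu mu' nu' : Mor L,
          ks mu = kr nu -> lam = kcomp mu nu -> kd mu = m -> kd nu = n ->
          ks mu' = kr nu' -> lam = kcomp mu' nu' -> kd mu' = m -> kd nu' = n ->
          mu = mu' /\ nu = nu')).

Definition locally_finite_no_sources_sinks : Prop :=
  forall (p : Nk k) (v : Vert L),
    (exists s : seq (Mor L), forall f, kr f = v -> kd f = p -> f \in s) /\
    (exists f : Mor L, kr f = v /\ kd f = p) /\
    (exists s : seq (Mor L), forall f, ks f = v -> kd f = p -> f \in s) /\
    (exists f : Mor L, ks f = v /\ kd f = p).

Definition is_automorphism (fV : Vert L -> Vert L) (fM : Mor L -> Mor L) : Prop :=
  bijective fV /\ bijective fM /\
  (forall f, kr (fM f) = fV (kr f) /\ ks (fM f) = fV (ks f)) /\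
  (forall v, fM (kid v) = kid (fV v)) /\
  (forall f g, ks f = kr g -> fM (kcomp f g) = kcomp (fM f) (fM g)) /\
  (forall f, kd (fM f) = kd f).

Definition is_action (l : nat) (aV : Zl l -> Vert L -> Vert L)
    (aM : Zl l -> Mor L -> Mor L) : Prop :=
  (forall z, is_automorphism (aV z) (aM z)) /\
  (forall v, aV (zeroZ l) v = v) /\ (forall f, aM (zeroZ l) f = f) /\
  (forall z w v, aV (addZ z w) v = aV z (aV w v)) /\
  (forall z w f, aM (addZ z w) f = aM z (aM w f)).

(* Infinite paths: degree-preserving functors Omega_k -> Lambda, recorded by
   their morphism map x a b = x(a,b) (only meaningful for a <= b). *)
Definition path_fun := Nk k -> Nk k -> Mor L.

Definition inf_path (x : path_fun) : Prop :=
  (forall a, x a a = kid (kr (x a a))) /\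
  (forall a b, leN a b -> kr (x a b) = kr (x a a) /\ ks (x a b) = kr (x b b)) /\
  (forall a b c, leN a b -> leN b c -> kcomp (x a b) (x b c) = x a c) /\
  (forall a b, leN a b -> kd (x a b) = subN b a).

Definition path_eq (x y : path_fun) : Prop :=
  forall a b, leN a b -> x a b = y a b.

Definition in_cyl (lam : Mor L) (x : path_fun) : Prop :=
  x (zeroN k) (kd lam) = lam.
Definition in_vcyl (v : Vert L) (x : path_fun) : Prop :=
  x (zeroN k) (zeroN k) = kid v.

Definition shift (p : Nk k) (x : path_fun) : path_fun :=
  fun a b => x (addN p a) (addN p b).
Definition autinf (fM : Mor L -> Mor L) (x : path_fun) : path_fun :=
  fun a b => fM (x a b).

Definition tau (l : nat) (aM : Zl l -> Mor L -> Mor L) (s : Nk k * Nk l)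
    (x : path_fun) : path_fun :=
  shift s.1 (autinf (aM (negN s.2)) x).

(* The topology on Lambda^oo is generated by the cylinder sets (a subbasis);
   basic open sets are finite intersections of cylinder sets. A set S has
   empty interior iff every nonempty basic open set meets the complement. *)
Definition in_basic (ls : seq (Mor L)) (x : path_fun) : Prop :=
  forall lam, lam \in ls -> in_cyl lam x.

Definition empty_interior (S : path_fun -> Prop) : Prop :=
  forall (ls : seq (Mor L)) (x : path_fun), inf_path x -> in_basic ls x ->
    exists y, inf_path y /\ in_basic ls y /\ ~ S y.

Definition topologically_free (l : nat) (aM : Zl l -> Mor L -> Mor L) : Prop :=
  forall s t : Nk k * Nk l, s <> t ->
    empty_interior (fun x => path_eq (tau aM s x) (tau aM t x)).

Definition alpha_aperiodic (l : nat) (aM : Zl l -> Mor L -> Mor L) : Prop :=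
  forall (v : Vert L) (s t : Nk k * Nk l), s <> t ->
    exists x, inf_path x /\ in_vcyl v x /\ ~ path_eq (tau aM s x) (tau aM t x).

End KGraph.

From mathcomp Require Import all_boot all_algebra.
From Stdlib Require Import ClassicalEpsilon.
Set Implicit Arguments. Unset Strict Implicit. Unset Printing Implicit Defensive.

(* A basic open set of Λ^∞ containing a path x contains the cylinder of the
   initial segment μ = x(0, r) of x, for r large.  If y ∈ s(μ)Λ^∞ is an
   α-aperiodicity witness, the concatenation μy lies in that cylinder, and
   τ_s(μy), τ_t(μy) shifted by d(μ) are τ_s y, τ_t y; so μy is outside the
   equaliser of τ_s and τ_t.  Conversely vΛ^∞ is a nonempty basic open set
   (Λ has no sources, so paths of every degree can be extended forever), and a
   point of it outside the equaliser witnesses α-aperiodicity at v. *)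

Lemma leNP k (a b : Nk k) : reflect (forall i, a i <= b i) (leN a b).
Proof. exact: forallP. Qed.

Lemma addNA k (a b c : Nk k) : addN a (addN b c) = addN (addN a b) c.
Proof. by apply/ffunP => i; rewrite !ffunE addnA. Qed.

Lemma addNC k (a b : Nk k) : addN a b = addN b a.
Proof. by apply/ffunP => i; rewrite !ffunE addnC. Qed.

Lemma subNK k (a b : Nk k) : leN a b -> addN a (subN b a) = b.
Proof. by move/leNP=> le; apply/ffunP => i; rewrite !ffunE subnKC. Qed.

Lemma addKN k (a c : Nk k) : subN (addN a c) a = c.
Proof. by apply/ffunP => i; rewrite !ffunE addKn. Qed.

Lemma subNn k (a : Nk k) : subN a a = zeroN k.
Proof. by apply/ffunP => i; rewrite !ffunE subnn. Qed.

Lemma subN0 k (a : Nk k) : subN a (zeroN k) = a.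
Proof. by apply/ffunP => i; rewrite !ffunE subn0. Qed.

Lemma leNn k (a : Nk k) : leN a a.
Proof. by apply/leNP. Qed.

Lemma le0N k (a : Nk k) : leN (zeroN k) a.
Proof. by apply/leNP => i; rewrite ffunE. Qed.

Lemma leN_trans k (a b c : Nk k) : leN a b -> leN b c -> leN a c.
Proof. by move/leNP=> ab /leNP bc; apply/leNP => i; exact: leq_trans (ab i) (bc i). Qed.

Lemma leN_addr k (a b : Nk k) : leN a (addN a b).
Proof. by apply/leNP => i; rewrite ffunE leq_addr. Qed.

Lemma leN_addl k (a b : Nk k) : leN a (addN b a).
Proof. by apply/leNP => i; rewrite ffunE leq_addl. Qed.

Lemma leN_add2l k (r a b : Nk k) : leN a b -> leN (addN r a) (addN r b).
Proof. by move/leNP=> le; apply/leNP => i; rewrite !ffunE leq_add2l. Qed.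

Definition constN k (n : nat) : Nk k := [ffun _ => n].
Definition maxN k (N : Nk k) : nat := \max_i N i.

Lemma leN_const k n n' : n <= n' -> leN (constN k n) (constN k n').
Proof. by move=> le; apply/leNP => i; rewrite !ffunE. Qed.

Lemma leN_maxN k (N : Nk k) : leN N (constN k (maxN N)).
Proof. by apply/leNP => i; rewrite ffunE; exact: leq_bigmax. Qed.

Lemma maxN_mono k (N N' : Nk k) : leN N N' -> maxN N <= maxN N'.
Proof.
move/leNP=> le; apply/bigmax_leqP => i _; exact: leq_trans (le i) (leq_bigmax i).
Qed.

Lemma leN_sum k (T : eqType) (f : T -> Nk k) (s : seq T) x :
  x \in s -> leN (f x) (foldr (@addN k) (zeroN k) (map f s)).
Proof.
elim: s => [|y s IH] //=; rewrite inE => /orP [/eqP ->|xs]; first exact: leN_addr.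
exact: leN_trans (IH xs) (leN_addl _ _).
Qed.

Section Factorisation.
Variables (k : nat) (L : kgraph_data k).
Hypothesis HL : is_kgraph L.

Lemma kid_ends (v : Vert L) : kr (kid v) = v /\ ks (kid v) = v.
Proof. by case: HL => H _; exact: H. Qed.

Lemma kcomp_ends (f g : Mor L) :
  ks f = kr g -> kr (kcomp f g) = kr f /\ ks (kcomp f g) = ks g.
Proof. by case: HL => _ [H _]; exact: H. Qed.

Lemma kcomp_kid (f : Mor L) : kcomp (kid (kr f)) f = f /\ kcomp f (kid (ks f)) = f.
Proof. by case: HL => _ [_ [H _]]; exact: H. Qed.

Lemma kcompA (f g h : Mor L) : ks f = kr g -> ks g = kr h ->
  kcomp (kcomp f g) h = kcomp f (kcomp g h).
Proof. by case: HL => _ [_ [_ [H _]]]; exact: H. Qed.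

Lemma kd_kid (v : Vert L) : kd (kid v) = zeroN k.
Proof. by case: HL => _ [_ [_ [_ [H _]]]]; exact: H. Qed.

Lemma kd_kcomp (f g : Mor L) : ks f = kr g -> kd (kcomp f g) = addN (kd f) (kd g).
Proof. by case: HL => _ [_ [_ [_ [_ [H _]]]]]; exact: H. Qed.

Lemma unique_factorisation (lam : Mor L) (m n : Nk k) : kd lam = addN m n ->
  (exists mu nu : Mor L, ks mu = kr nu /\ lam = kcomp mu nu /\ kd mu = m /\ kd nu = n) /\
  (forall mu nu mu' nu' : Mor L,
      ks mu = kr nu -> lam = kcomp mu nu -> kd mu = m -> kd nu = n ->
      ks mu' = kr nu' -> lam = kcomp mu' nu' -> kd mu' = m -> kd nu' = n ->
      mu = mu' /\ nu = nu').
Proof. by case: HL => _ [_ [_ [_ [_ [_ H]]]]]; exact: H. Qed.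

(* [prefix lam m] and [suffix lam m] are λ(0, m) and λ(m, d(λ)) in the paper's
   notation; they are chosen by [epsilon] and only meaningful when m <= d(λ). *)
Definition factorises (lam : Mor L) (m : Nk k) (p : Mor L * Mor L) : Prop :=
  ks p.1 = kr p.2 /\ lam = kcomp p.1 p.2 /\ kd p.1 = m /\ kd p.2 = subN (kd lam) m.

Definition factor (lam : Mor L) (m : Nk k) : Mor L * Mor L :=
  epsilon (inhabits (lam, lam)) (factorises lam m).

Definition prefix (lam : Mor L) (m : Nk k) : Mor L := (factor lam m).1.
Definition suffix (lam : Mor L) (m : Nk k) : Mor L := (factor lam m).2.

Lemma factorP lam m : leN m (kd lam) -> factorises lam m (factor lam m).
Proof.
move=> le; apply: epsilon_spec.
have [[mu [nu [? [? [? ?]]]]] _] := unique_factorisation (esym (subNK le)).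
by exists (mu, nu).
Qed.

Lemma factor_unique lam m (mu nu : Mor L) :
  ks mu = kr nu -> lam = kcomp mu nu -> kd mu = m -> factor lam m = (mu, nu).
Proof.
move=> mu_nu lam_eq kd_mu.
have kd_lam : kd lam = addN m (kd nu) by rewrite lam_eq kd_kcomp // kd_mu.
have le : leN m (kd lam) by rewrite kd_lam leN_addr.
have kd_nu : kd nu = subN (kd lam) m by rewrite kd_lam addKN.
have [_ uniq] := unique_factorisation (esym (subNK le)).
have [F1 [F2 [F3 F4]]] := factorP le.
have [E1 E2] := uniq _ _ _ _ F1 F2 F3 F4 mu_nu lam_eq kd_mu kd_nu.
by case: (factor lam m) E1 E2 => /= ? ? -> ->.
Qed.

Lemma kd0_kid (f : Mor L) : kd f = zeroN k -> f = kid (kr f).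
Proof.
move=> kd_f; have [_ src] := kid_ends (kr f); have [rng _] := kid_ends (ks f).
have [id_l id_r] := kcomp_kid f.
have := @factor_unique f (zeroN k) (kid (kr f)) f; rewrite kd_kid.
have -> := @factor_unique f (zeroN k) f (kid (ks f)) => //.
by move=> /(_ src (esym id_l) erefl) [].
Qed.

Lemma prefix_kd lam m : leN m (kd lam) ->
  kd (prefix lam m) = m /\ kd (suffix lam m) = subN (kd lam) m.
Proof. by move=> /factorP [_ [_ []]]. Qed.

Lemma prefix_suffix lam m : leN m (kd lam) -> lam = kcomp (prefix lam m) (suffix lam m).
Proof. by move=> /factorP [_ []]. Qed.

Lemma prefix_ends lam m : leN m (kd lam) ->
  kr (prefix lam m) = kr lam /\ ks (suffix lam m) = ks lam /\
  ks (prefix lam m) = kr (suffix lam m).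
Proof.
move=> /factorP; rewrite /prefix /suffix; case: (factor lam m) => p q /= [pq [-> _]].
by have [-> ->] := kcomp_ends pq.
Qed.

Lemma prefix_full (mu : Mor L) : prefix mu (kd mu) = mu /\ suffix mu (kd mu) = kid (ks mu).
Proof.
have [rng _] := kid_ends (ks mu); have [_ id_r] := kcomp_kid mu.
by rewrite /prefix /suffix (@factor_unique mu (kd mu) mu (kid (ks mu))).
Qed.

Lemma prefix0 (mu : Mor L) : prefix mu (zeroN k) = kid (kr mu) /\ suffix mu (zeroN k) = mu.
Proof.
have [_ src] := kid_ends (kr mu); have [id_l _] := kcomp_kid mu.
by rewrite /prefix /suffix (@factor_unique mu (zeroN k) (kid (kr mu)) mu) ?kd_kid.
Qed.

Lemma prefix_kcomp (mu nu : Mor L) m : ks mu = kr nu -> leN m (kd mu) ->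
  prefix (kcomp mu nu) m = prefix mu m /\ suffix (kcomp mu nu) m = kcomp (suffix mu m) nu.
Proof.
move=> mu_nu /factorP; rewrite /prefix /suffix.
case: (factor mu m) => p q /= [pq [mu_eq [kd_p _]]].
have q_nu : ks q = kr nu by rewrite -mu_nu mu_eq; case: (kcomp_ends pq).
have [qnu_rng _] := kcomp_ends q_nu.
by rewrite (@factor_unique _ m p (kcomp q nu)) // ?qnu_rng // mu_eq kcompA.
Qed.

Lemma prefix_prefix lam m n : leN m n -> leN n (kd lam) ->
  prefix (prefix lam n) m = prefix lam m.
Proof.
move=> le_mn le_n; have [_ [_ ends]] := prefix_ends le_n.
have [kd_pre _] := prefix_kd le_n.
rewrite {2}(prefix_suffix le_n).
by case: (prefix_kcomp (m := m) ends); rewrite ?kd_pre.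
Qed.

(* An infinite path is determined by its initial segments x(0, N): a coherent
   family F of finite paths, F N of degree N, yields x(a, b) := F(b)(a, b). *)
Definition path_of (F : Nk k -> Mor L) : path_fun L := fun a b => suffix (F b) a.

Section PathOfPrefixes.
Variable F : Nk k -> Mor L.
Hypothesis kd_F : forall N, kd (F N) = N.
Hypothesis F_coherent : forall N N', leN N N' -> prefix (F N') N = F N.

Lemma path_of_factor a b : leN a b ->
  ks (F a) = kr (path_of F a b) /\ F b = kcomp (F a) (path_of F a b) /\
  kd (path_of F a b) = subN b a.
Proof.
move=> le; have le' : leN a (kd (F b)) by rewrite kd_F.
have [_ [_ ends]] := prefix_ends le'; have [_ kd_suf] := prefix_kd le'.
rewrite kd_F in kd_suf; rewrite /path_of -(F_coherent le).
by split => //; split => //; exact: prefix_suffix.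
Qed.

Lemma path_of_diag a : path_of F a a = kid (ks (F a)).
Proof. by rewrite /path_of; have := prefix_full (F a); rewrite kd_F => -[_ ->]. Qed.

Lemma path_of_inf : inf_path (path_of F).
Proof.
split; first by move=> a; apply: kd0_kid; have [_ [_ ->]] := path_of_factor (leNn a); exact: subNn.
split.
  move=> a b le; have [ab [F_b _]] := path_of_factor le.
  rewrite !path_of_diag; have [-> _] := kid_ends (ks (F a)); have [-> _] := kid_ends (ks (F b)).
  by split => //; have [_ <-] := kcomp_ends ab; rewrite -F_b.
split; last by move=> a b le; have [_ [_ ->]] := path_of_factor le.
move=> a b c lab lbc.
have [ab [F_b _]] := path_of_factor lab; have [bc [F_c _]] := path_of_factor lbc.
have [ac [F_c' _]] := path_of_factor (leN_trans lab lbc).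
have ab_bc : ks (path_of F a b) = kr (path_of F b c) by rewrite -bc F_b; case: (kcomp_ends ab).
have [rng _] := kcomp_ends ab_bc.
have := @factor_unique (F c) a (F a) (kcomp (path_of F a b) (path_of F b c)).
rewrite (factor_unique ac F_c' (kd_F a)) rng F_c F_b kcompA //.
by move=> /(_ ab erefl (kd_F a)) [->].
Qed.

Lemma path_of_init N : path_of F (zeroN k) N = F N.
Proof. by rewrite /path_of; case: (prefix0 (F N)). Qed.

End PathOfPrefixes.

Section InfinitePath.
Variable x : path_fun L.
Hypothesis Hx : inf_path x.

Lemma path_ends a b c : leN a b -> leN b c -> ks (x a b) = kr (x b c).
Proof.
by case: Hx => _ [ends _] lab lbc; have [_ ->] := ends a b lab; have [-> _] := ends b c lbc.
Qed.

Lemma path_comp a b c : leN a b -> leN b c -> kcomp (x a b) (x b c) = x a c.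
Proof. by case: Hx => _ [_ [H _]]; exact: H. Qed.

Lemma path_kd a b : leN a b -> kd (x a b) = subN b a.
Proof. by case: Hx => _ [_ [_ H]]; exact: H. Qed.

Lemma path_kd0 N : kd (x (zeroN k) N) = N.
Proof. by rewrite path_kd ?subN0 ?le0N. Qed.

Lemma path_prefix m n : leN m n -> prefix (x (zeroN k) n) m = x (zeroN k) m.
Proof.
move=> le; rewrite -(path_comp (le0N m) le).
have le_kd : leN m (kd (x (zeroN k) m)) by rewrite path_kd0 leNn.
have [-> _] := prefix_kcomp (path_ends (le0N m) le) le_kd.
by have [] := prefix_full (x (zeroN k) m); rewrite path_kd0.
Qed.

Lemma path_range N : kr (x (zeroN k) N) = kr (x (zeroN k) (zeroN k)).
Proof. by case: Hx => _ [ends _]; have [-> _] := ends _ N (le0N N). Qed.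

End InfinitePath.

Lemma in_vcyl_kr (v : Vert L) (x : path_fun L) : in_vcyl v x -> kr (x (zeroN k) (zeroN k)) = v.
Proof. by rewrite /in_vcyl => ->; case: (kid_ends v). Qed.

End Factorisation.

Section InfinitePathExistence.
Variables (k : nat) (L : kgraph_data k).
Hypothesis HL : is_kgraph L.
Hypothesis no_sources : forall (u : Vert L) (p : Nk k), exists f : Mor L, kr f = u /\ kd f = p.

Definition step (u : Vert L) : Mor L :=
  epsilon (inhabits (kid u)) (fun f => kr f = u /\ kd f = constN k 1).

Lemma stepP u : kr (step u) = u /\ kd (step u) = constN k 1.
Proof. exact: epsilon_spec (no_sources u (constN k 1)). Qed.

Fixpoint diag_path (v : Vert L) (n : nat) : Mor L :=
  if n is n'.+1 then kcomp (diag_path v n') (step (ks (diag_path v n'))) else kid v.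

Lemma diag_pathP v n : kd (diag_path v n) = constN k n /\ kr (diag_path v n) = v.
Proof.
elim: n => [|n [kd_n kr_n]] /=.
  by rewrite kd_kid //; split; [apply/ffunP => i; rewrite !ffunE | case: (kid_ends HL v)].
have [step_r step_d] := stepP (ks (diag_path v n)).
rewrite kd_kcomp // step_d kd_n; split; last by case: (kcomp_ends HL (esym step_r)) => ->.
by apply/ffunP => i; rewrite !ffunE addn1.
Qed.

Lemma prefix_diag_path v n n' : n <= n' ->
  prefix (diag_path v n') (constN k n) = diag_path v n.
Proof.
elim: n' => [|n' IH].
  by rewrite leqn0 => /eqP ->; have [<- _] := diag_pathP v 0; case: (prefix_full HL (diag_path v 0)).
rewrite leq_eqVlt => /orP [/eqP ->|lt].
  by have [<- _] := diag_pathP v n'.+1; case: (prefix_full HL (diag_path v n'.+1)).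
have [step_r _] := stepP (ks (diag_path v n')).
have le : leN (constN k n) (kd (diag_path v n')).
  by have [-> _] := diag_pathP v n'; exact: leN_const.
by rewrite /=; have [-> _] := prefix_kcomp HL (esym step_r) le; exact: IH.
Qed.

Lemma exists_inf_path (v : Vert L) : exists x, inf_path x /\ in_vcyl v x.
Proof.
pose F N := prefix (diag_path v (maxN N)) N.
have le_diag N : leN N (kd (diag_path v (maxN N))).
  by have [-> _] := diag_pathP v (maxN N); exact: leN_maxN.
have kd_F N : kd (F N) = N by have [] := prefix_kd HL (le_diag N).
have F_coherent N N' : leN N N' -> prefix (F N') N = F N.
  move=> le; rewrite /F (prefix_prefix HL le (le_diag N')).
  have le' : leN (constN k (maxN N)) (kd (diag_path v (maxN N'))).
    by have [-> _] := diag_pathP v (maxN N'); exact/leN_const/maxN_mono.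
  by rewrite -(prefix_prefix HL (leN_maxN N) le') prefix_diag_path // maxN_mono.
exists (path_of F); split; first exact: path_of_inf.
rewrite /in_vcyl (path_of_init HL) /F /=; have [-> _] := prefix0 HL (diag_path v (maxN (zeroN k))).
by have [_ ->] := diag_pathP v (maxN (zeroN k)).
Qed.

End InfinitePathExistence.

Section Concatenation.
Variables (k : nat) (L : kgraph_data k).
Hypothesis HL : is_kgraph L.
Variables (mu : Mor L) (y : path_fun L).
Hypothesis Hy : inf_path y.
Hypothesis mu_y : ks mu = kr (y (zeroN k) (zeroN k)).

Definition cat_init (N : Nk k) : Mor L := kcomp mu (y (zeroN k) N).

Lemma mu_yN N : ks mu = kr (y (zeroN k) N).
Proof. by rewrite (path_range Hy). Qed.

Lemma kd_cat_init N : kd (cat_init N) = addN (kd mu) N.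
Proof. by rewrite /cat_init kd_kcomp ?(path_kd0 Hy) //; exact: mu_yN. Qed.

Lemma cat_init_ext N N' : leN N N' ->
  cat_init N' = kcomp (cat_init N) (y N N') /\ ks (cat_init N) = kr (y N N').
Proof.
move=> le; have ends := path_ends Hy (le0N N) le.
rewrite /cat_init -(path_comp Hy (le0N N) le) kcompA //; last exact: mu_yN.
by split => //; have [_ ->] := kcomp_ends HL (mu_yN N).
Qed.

Lemma le_cat_init N : leN N (kd (cat_init N)).
Proof. by rewrite kd_cat_init leN_addl. Qed.

(* The concatenation μy, given by its initial segments (μy)(0, N) = (μ y(0, N))(0, N). *)
Definition cat_path : path_fun L := path_of (fun N => prefix (cat_init N) N).

Lemma kd_cat_prefix N : kd (prefix (cat_init N) N) = N.
Proof. by have [] := prefix_kd HL (le_cat_init N). Qed.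

Lemma cat_prefix_coherent N N' : leN N N' ->
  prefix (prefix (cat_init N') N') N = prefix (cat_init N) N.
Proof.
move=> le; rewrite (prefix_prefix HL le (le_cat_init N')).
have [-> ends] := cat_init_ext le.
by have [-> _] := prefix_kcomp HL ends (le_cat_init N).
Qed.

Lemma cat_path_inf : inf_path cat_path.
Proof. exact: path_of_inf kd_cat_prefix cat_prefix_coherent. Qed.

Lemma cat_path_init m : leN m (kd mu) -> cat_path (zeroN k) m = prefix mu m.
Proof.
move=> le; rewrite /cat_path (path_of_init HL).
by have [-> _] := prefix_kcomp HL (mu_yN m) le.
Qed.

Lemma cat_path_shift a b : leN a b -> cat_path (addN (kd mu) a) (addN (kd mu) b) = y a b.
Proof.
move=> le; rewrite /cat_path /path_of.
have [cat_b ends_b] := cat_init_ext (leN_addl b (kd mu)).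
have -> : prefix (cat_init (addN (kd mu) b)) (addN (kd mu) b) = cat_init b.
  have le_b : leN (addN (kd mu) b) (kd (cat_init b)) by rewrite kd_cat_init leNn.
  rewrite cat_b; have [-> _] := prefix_kcomp HL ends_b le_b.
  by rewrite -kd_cat_init; case: (prefix_full HL (cat_init b)).
have [cat_ab ends_ab] := cat_init_ext le.
by rewrite /suffix (factor_unique HL ends_ab cat_ab (kd_cat_init a)).
Qed.

End Concatenation.

Section Equivalence.
Variables (k l : nat) (L : kgraph_data k) (aM : Zl l -> Mor L -> Mor L).
Hypothesis HL : is_kgraph L.

Lemma cat_path_in_basic (ls : seq (Mor L)) (x y : path_fun L) (r : Nk k) :
  inf_path x -> inf_path y -> in_basic ls x -> (forall lam, lam \in ls -> leN (kd lam) r) ->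
  ks (x (zeroN k) r) = kr (y (zeroN k) (zeroN k)) ->
  in_basic ls (cat_path (x (zeroN k) r) y).
Proof.
move=> Hx Hy Hb le_r x_y lam ls_lam; have le := le_r lam ls_lam.
rewrite /in_cyl cat_path_init //; last by rewrite (path_kd0 Hx).
by rewrite (path_prefix HL Hx le); exact: Hb.
Qed.

Lemma tau_cat_path (s t : Nk k * Nk l) (mu : Mor L) (y : path_fun L) :
  inf_path y -> ks mu = kr (y (zeroN k) (zeroN k)) ->
  path_eq (tau aM s (cat_path mu y)) (tau aM t (cat_path mu y)) ->
  path_eq (tau aM s y) (tau aM t y).
Proof.
move=> Hy mu_y eq_st a b le; have := eq_st _ _ (leN_add2l (kd mu) le).
have shiftC p c : addN p (addN (kd mu) c) = addN (kd mu) (addN p c).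
  by rewrite !addNA (addNC p).
by rewrite /tau /shift /autinf !shiftC !cat_path_shift // leN_add2l.
Qed.

Lemma aperiodic_topologically_free : alpha_aperiodic aM -> topologically_free aM.
Proof.
move=> aper s t st ls x Hx Hb.
pose r := foldr (@addN k) (zeroN k) (map kd ls).
have le_r lam : lam \in ls -> leN (kd lam) r by exact: leN_sum.
have [y [Hy [Hv ne_st]]] := aper (ks (x (zeroN k) r)) s t st.
have x_y : ks (x (zeroN k) r) = kr (y (zeroN k) (zeroN k)) by rewrite (in_vcyl_kr HL Hv).
exists (cat_path (x (zeroN k) r) y); split; first exact: cat_path_inf.
by split; [exact: cat_path_in_basic | move/(tau_cat_path Hy x_y)].
Qed.

Lemma topologically_free_aperiodic :
  (forall (u : Vert L) (p : Nk k), exists f : Mor L, kr f = u /\ kd f = p) ->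
  topologically_free aM -> alpha_aperiodic aM.
Proof.
move=> no_sources tfree v s t st.
have [x [Hx Hv]] := exists_inf_path HL no_sources v.
have Hb : in_basic [:: kid v] x by move=> _ /[1!inE] /eqP ->; rewrite /in_cyl kd_kid.
have [y [Hy [Hb' ne_st]]] := tfree s t st _ x Hx Hb.
by exists y; split => //; split => //; have := Hb' (kid v); rewrite inE eqxx /in_cyl kd_kid //; apply.
Qed.

End Equivalence.

Theorem lemma5p6 (k l : nat) (L : kgraph_data k)
    (aV : Zl l -> Vert L -> Vert L) (aM : Zl l -> Mor L -> Mor L) :
  is_kgraph L ->
  locally_finite_no_sources_sinks L ->
  is_action aV aM ->
  (alpha_aperiodic aM <-> topologically_free aM).
Proof.
move=> HL lf _; split; first exact: aperiodic_topologically_free.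
apply: topologically_free_aperiodic => // u p.
by have [_ [no_sources _]] := lf p u.
Qed.
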